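(* Let $m\ge 1$, $n\ge 1$ and $N>2n$ be integers and let $T\ge 1$. For parameters $M_0,M_1,\dots,M_n\in\mathbb R^{m\times m}$ with $M_0=M_0^\top$, let $\mathbf M_N$ be the $mN\times mN$ matrix, viewed as an $N\times N$ array of $m\times m$ blocks indexed by $i,j\in\{1,\dots,N\}$, whose $(i,j)$ block equals $M_k$ if $i-j\equiv k \pmod N$ with $0\le k\le n$, equals $M_k^\top$ if $j-i\equiv k\pmod N$ with $1\le k\le n$, and equals $0$ otherwise. The parameters are admissible if $\mathbf M_N$ is positive definite, and then they define the Gaussian density $$p_{(M_0,\dots,M_n)}(y)=(2\pi)^{-mN/2}\det(\mathbf M_N)^{1/2}\exp\!\left(-\tfrac12 y^\top\mathbf M_N y\right),\qquad y\in\mathbb R^{mN}.$$ Let $y^{(1)},\dots,y^{(T)}\in\mathbb R^{mN}$ be observations, treated as independent samples from this density, and write $y^{(t)}=(y^{(t)}(1)^\top,\dots,y^{(t)}(N)^\top)^\top$ with $y^{(t)}(j)\in\mathbb R^m$. Define the sample covariances $$\hat\Sigma_k=\frac{1}{NT}\sum_{t=1}^T\sum_{j=1}^N y^{(t)}(j+k)\,y^{(t)}(j)^\top,\qquad k=0,1,\dots,n,$$ with time indices taken modulo $N$. Suppose $\hat{\boldsymbol\Sigma}_N$ is a solution of the block-circulant band extension problem with data $\hat\Sigma_0,\dots,\hat\Sigma_n$, i.e. $\hat{\boldsymbol\Sigma}_N$ is a symmetric positive definite $mN\times mN$ matrix whose $(i,j)$ block equals $\Sigma_{(i-j)\bmod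 N}$ for some matrices $\Sigma_0,\dots,\Sigma_{N-1}\in\mathbb R^{m\times m}$ with $\Sigma_k=\hat\Sigma_k$ for $k=0,\dots,n$, and such that $\hat{\boldsymbol\Sigma}_N^{-1}$ is block-circulant and banded of bandwidth $n$ (its $(i,j)$ block is zero whenever the cyclic distance $\min\{(i-j)\bmod N,(j-i)\bmod N\}$ exceeds $n$). Then the maximum likelihood estimates of $(M_0,M_1,\dots,M_n)$, i.e. the admissible parameters maximizing $\prod_{t=1}^T p_{(M_0,\dots,M_n)}(y^{(t)})$, are the nonzero blocks of $\hat{\boldsymbol\Sigma}_N^{-1}$: $\hat M_k$ is the $(k+1,1)$ block of $\hat{\boldsymbol\Sigma}_N^{-1}$, $k=0,\dots,n$.
   Context: This is the maximum likelihood identification problem for (Gaussian) AR-type stationary reciprocal models $\mathbf M_N\mathbf y=\mathbf e$ on the discrete circle $\mathbb Z_N$; the likelihood does not require the true data distribution to be Gaussian. A matrix is block-circulant if its $(i,j)$ block depends only on $(i-j)\bmod N$. *)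

From mathcomp Require Import all_boot all_order all_algebra.
From mathcomp Require Import reals.
From mathcomp.analysis Require Import sequences exp trigo.
Set Implicit Arguments. Unset Strict Implicit. Unset Printing Implicit Defensive.
Import Order.TTheory GRing.Theory Num.Theory.
Local Open Scope ring_scope.

(* Vectors/matrices of size m*N are viewed as N blocks of size m:
   the pair (block index j : 'I_N, offset r : 'I_m) corresponds to the
   global index mxvec_index j r : 'I_(N*m) (a bijection). *)
Definition pos_of (N m : nat) (j : 'I_N) (r : 'I_m) : 'I_(N * m) :=
  mxvec_index j r.
Definition pair_of (N m : nat) (a : 'I_(N * m)) : 'I_N * 'I_m :=
  enum_val (cast_ord (esym (mxvec_cast N m)) a).

Section Defs.
Variable R : realType.

Definition blk (N m : nat) (A : 'M[R]_(N * m)) (i j : 'I_N) : 'M[R]_m :=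
  \matrix_(r, s) A (pos_of i r) (pos_of j s).

(* block (k,l) with nat indices (0-based), 0 if out of range *)
Definition blkn (N m : nat) (A : 'M[R]_(N * m)) (k l : nat) : 'M[R]_m :=
  match @insub _ (fun x => x < N)%N 'I_N k, @insub _ (fun x => x < N)%N 'I_N l with
  | Some i, Some j => blk A i j
  | _, _ => 0
  end.

Definition blkmx (N m : nat) (B : 'I_N -> 'I_N -> 'M[R]_m) : 'M[R]_(N * m) :=
  \matrix_(a, b) B (pair_of a).1 (pair_of b).1 (pair_of a).2 (pair_of b).2.

Definition vblk (N m : nat) (y : 'cV[R]_(N * m)) (j : 'I_N) : 'cV[R]_m :=
  \col_r y (pos_of j r) 0.

(* (i - j) mod N, for i j < N *)
Definition cdiff (N : nat) (i j : nat) : nat := ((i + N - j) %% N)%N.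

(* parameter M_k for k : nat, 0 if k > n *)
Definition getM (n m : nat) (M : 'I_n.+1 -> 'M[R]_m) (k : nat) : 'M[R]_m :=
  match @insub _ (fun x => x < n.+1)%N 'I_n.+1 k with
  | Some i => M i | None => 0 end.

Definition bigM (N n m : nat) (M : 'I_n.+1 -> 'M[R]_m) : 'M[R]_(N * m) :=
  blkmx (fun i j : 'I_N =>
    if (cdiff N i j <= n)%N then getM M (cdiff N i j)
    else if (cdiff N j i <= n)%N then (getM M (cdiff N j i))^T
    else 0).

Definition posdef (k : nat) (A : 'M[R]_k) : Prop :=
  A^T = A /\ forall x : 'cV[R]_k, x != 0 -> 0 < (x^T *m A *m x) 0 0.

Definition admissible (N n m : nat) (M : 'I_n.+1 -> 'M[R]_m) : Prop :=
  (M ord0)^T = M ord0 /\ posdef (bigM N M).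

Definition density (N n m : nat) (M : 'I_n.+1 -> 'M[R]_m) (y : 'cV[R]_(N * m)) : R :=
  (Num.sqrt (2 * pi)) ^- (N * m) * Num.sqrt (\det (bigM N M))
  * expR (- (1 / 2) * (y^T *m bigM N M *m y) 0 0).

Definition likelihood (T N n m : nat) (M : 'I_n.+1 -> 'M[R]_m)
  (y : 'I_T -> 'cV[R]_(N * m)) : R :=
  \prod_(t < T) density M (y t).

Definition shiftN (N : nat) (j : 'I_N) (k : nat) : 'I_N := insubd j ((j + k) %% N)%N.

Definition sampleCov (T N m : nat) (y : 'I_T -> 'cV[R]_(N * m)) (k : nat) : 'M[R]_m :=
  (N * T)%:R^-1 *: \sum_(t < T) \sum_(j < N) (vblk (y t) (shiftN j k) *m (vblk (y t) j)^T).

Definition circ_band_ext (T N n m : nat) (y : 'I_T -> 'cV[R]_(N * m))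
  (Sig : 'M[R]_(N * m)) : Prop :=
  posdef Sig /\
  (exists S : nat -> 'M[R]_m,
     (forall i j : 'I_N, blk Sig i j = S (cdiff N i j)) /\
     (forall k, (k <= n)%N -> S k = sampleCov y k)) /\
  (exists C : nat -> 'M[R]_m, forall i j : 'I_N, blk (invmx Sig) i j = C (cdiff N i j)) /\
  (forall i j : 'I_N, (n < minn (cdiff N i j) (cdiff N j i))%N -> blk (invmx Sig) i j = 0).

End Defs.

From mathcomp Require Import all_boot all_order all_algebra.
From mathcomp Require Import reals.
From mathcomp.analysis Require Import sequences exp trigo.
From mathcomp.algebra_tactics Require Import ring lra.
Set Implicit Arguments. Unset Strict Implicit. Unset Printing Implicit Defensive.
Import Order.TTheory GRing.Theory Num.Theory.
Local Open Scope ring_scope.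

(* Since sum_t y_t^T M_N y_t = tr (M_N Y) with Y = sum_t y_t y_t^T, and M_N is banded
   block-circulant, this trace only involves the cyclic lag sums of Y of lags 0..n; these are
   N T Sigma_k, which Sig reproduces, so tr (M_N Y) = T tr (M_N Sig).  The likelihood is thus
   an increasing function of det M_N exp (- tr (M_N Sig)).  For positive definite A and S,
   det A det S <= exp (tr (A S) - k) with equality only if A S = 1 (the inequality
   x <= exp (x - 1), lifted to matrices by Schur complements and a Cholesky congruence),
   so the unique maximiser is M_N = Sig^-1, which is banded block-circulant and hence
   equal to the M_N built from its own first block column. *)

Section PosdefDet.
Variable R : realType.

Lemma mx11_mulE p q (P : 'M[R]_(p, 1)) (Q : 'M[R]_(1, q)) i j :
  (P *m Q) i j = P i 0 * Q 0 j.
Proof. by rewrite mxE big_ord1. Qed.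

Lemma quad_block k1 k2 (u : 'cV[R]_k1) (v : 'cV[R]_k2) A B C D :
  (col_mx u v)^T *m block_mx A B C D *m col_mx u v =
  u^T *m A *m u + u^T *m B *m v + (v^T *m C *m u + v^T *m D *m v).
Proof.
rewrite tr_col_mx mul_row_block mul_row_col !mulmxDl.
by rewrite -!addrA; congr (_ + _); rewrite addrCA.
Qed.

Lemma posdef_block k (X : 'M[R]_(1 + k)) : posdef X ->
  exists a (b : 'cV[R]_k) D, X = block_mx a%:M b^T b D.
Proof.
move=> [hs _]; exists (ulsubmx X 0 0), (dlsubmx X), (drsubmx X).
rewrite -{1}[X]submxK -mx11_scalar; congr block_mx.
have := hs; rewrite -{1 2}[X]submxK tr_block_mx => /eq_block_mx [_ _ h _].
by rewrite -h trmxK.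
Qed.

Lemma posdef_schur k (a : R) (b : 'cV[R]_k) (D : 'M[R]_k) :
  posdef (block_mx a%:M b^T b D : 'M_(1 + k)) ->
  0 < a /\ posdef (D - a^-1 *: (b *m b^T)).
Proof.
move=> [hs hp].
have a_gt0 : 0 < a.
  have := hp (col_mx 1 0); rewrite quad_block.
  rewrite !(mul0mx, mulmx0, trmx0, addr0, mulmx1, mul1mx, trmx1) mxE eqxx mulr1n.
  apply; apply/negP => /eqP/colP/(_ (lshift k 0)).
  by rewrite col_mxEu !mxE /= => /eqP; rewrite oner_eq0.
have hD : D^T = D by move: hs; rewrite tr_block_mx => /eq_block_mx [_ _ _ ->].
split=> //; split; first by rewrite linearB /= linearZ /= trmx_mul trmxK hD.
move=> v v0.
pose s : R := (b^T *m v) 0 0.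
have vb : (v^T *m b) 0 0 = s by rewrite /s -[b in v^T *m b]trmxK -trmx_mul mxE.
(* The test vector (-s/a; v) turns the quadratic form of the block matrix into that of
   the Schur complement. *)
have := hp (col_mx (- (a^-1 * s))%:M v); rewrite quad_block.
have -> : (v^T *m (D - a^-1 *: (b *m b^T)) *m v) 0 0 =
    (v^T *m D *m v) 0 0 - a^-1 * s * s.
  rewrite mulmxBr mulmxBl -scalemxAr -scalemxAl [LHS]mxE [X in _ + X]mxE.
  congr (_ - _); rewrite mxE mulmxA -(mulmxA (v^T *m b)) mx11_mulE vb /s.
  by rewrite mulrA.
rewrite !tr_scalar_mx -!scalar_mxM mul_scalar_mx -scalemxAl mul_mx_scalar.
rewrite ![(_ + _ : 'M_1) 0 0]mxE ![(_ *: _ : 'M_1) 0 0]mxE [(_%:M : 'M_1) 0 0]mxE eqxx mulr1n.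
rewrite -/s vb => h; apply: (lt_le_trans (h _)).
  apply: contra v0 => /eqP; rewrite -col_mx0 => /eq_col_mx [_ ->] //.
by rewrite le_eqVlt; apply/orP; left; apply/eqP; field; rewrite lt0r_neq0.
Qed.

Lemma det_block_schur k (a : R) (b : 'cV[R]_k) (D : 'M[R]_k) : a != 0 ->
  \det (block_mx a%:M b^T b D : 'M_(1 + k)) = a * \det (D - a^-1 *: (b *m b^T)).
Proof.
move=> a0; pose E : 'M[R]_(1 + k) := block_mx 1%:M 0 (- (a^-1) *: b) 1%:M.
have detE : \det E = 1 by rewrite det_lblock !det1 mulr1.
have : E *m block_mx a%:M b^T b D = block_mx a%:M b^T 0 (D - a^-1 *: (b *m b^T)).
  rewrite mulmx_block !mul1mx !mul0mx !addr0; congr block_mx.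
    by rewrite -scalemxAl mul_mx_scalar scalerA mulNr mulVf // scaleN1r addNr.
  by rewrite -scalemxAl scaleNr addrC.
by move/(congr1 determinant); rewrite det_mulmx detE mul1r det_ublock det_scalar1.
Qed.

Lemma mxtrace_mul_tr k (b : 'cV[R]_k) : \tr (b *m b^T) = \sum_i b i 0 ^+ 2.
Proof. by apply: eq_bigr => i _; rewrite mx11_mulE mxE expr2. Qed.

Lemma mxtrace_mul_tr_ge0 k (b : 'cV[R]_k) : 0 <= \tr (b *m b^T).
Proof. by rewrite mxtrace_mul_tr sumr_ge0 // => i _; rewrite sqr_ge0. Qed.

Lemma mxtrace_mul_tr_eq0 k (b : 'cV[R]_k) : \tr (b *m b^T) = 0 -> b = 0.
Proof.
rewrite mxtrace_mul_tr => /eqP; rewrite psumr_eq0 => [/allP h|i _]; last first.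
  by rewrite sqr_ge0.
apply/colP => i; rewrite mxE.
by have := h i (mem_index_enum i); rewrite sqrf_eq0 => /eqP.
Qed.

Lemma le_expR_subr1 (x : R) : x <= expR (x - 1).
Proof. by have := expR_ge1Dx (x - 1); rewrite addrC subrK. Qed.

Lemma eq_expR_subr1 (x : R) : x = expR (x - 1) -> x = 1.
Proof.
move=> ex; apply/eqP/negPn/negP => x_neq1.
have : x - 1 != 0 by rewrite subr_eq0.
by move/expR_gt1Dx; rewrite addrC subrK -ex ltxx.
Qed.

(* Matrix form of x <= exp (x - 1), proved by peeling off one Schur complement at a time. *)
Lemma posdef_det_le_expR k (X : 'M[R]_k) : posdef X ->
  [/\ 0 < \det X, \det X <= expR (\tr X - k%:R)
    & \det X = expR (\tr X - k%:R) -> X = 1%:M].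
Proof.
elim: k X => [|k IH] X hX.
  have -> : X = 1%:M by apply/matrixP => [[]].
  by rewrite det1 mxtrace1 subrr expR0.
have [a [b [D eX]]] := posdef_block hX; subst X.
have [a_gt0 hQ] := posdef_schur hX.
set Q := D - a^-1 *: (b *m b^T) in hQ *.
have [dQ_gt0 dQ_le dQ_eq] := IH Q hQ.
rewrite det_block_schur ?lt0r_neq0 // (mxtrace_block (a%:M : 'M_1)) mxtrace_scalar.
have trQ : \tr Q = \tr D - a^-1 * \tr (b *m b^T) by rewrite /Q raddfB /= linearZ.
have tb_ge0 : 0 <= a^-1 * \tr (b *m b^T).
  by rewrite mulr_ge0 ?mxtrace_mul_tr_ge0 // invr_ge0 ltW.
have ea := le_expR_subr1 a.
have split_exp : expR (a - 1) * expR (\tr Q - k%:R) =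
    expR (a + \tr D - k.+1%:R) * expR (- (a^-1 * \tr (b *m b^T))).
  by rewrite -!expRD trQ -natr1; congr expR; ring.
have e_gt0 := expR_gt0 (a - 1); have eQ_gt0 := expR_gt0 (\tr Q - k%:R).
have eb_le1 : expR (- (a^-1 * \tr (b *m b^T))) <= 1.
  by rewrite -expR0 ler_expR oppr_le0.
have le_prod : a * \det Q <= expR (a - 1) * expR (\tr Q - k%:R).
  by rewrite ler_pM // ?ltW.
split; first by rewrite mulr_gt0.
  by apply: (le_trans le_prod); rewrite split_exp ler_piMr ?expR_ge0.
move=> heq.
have E_gt0 := expR_gt0 (a + \tr D - k.+1%:R).
have eb_eq1 : expR (- (a^-1 * \tr (b *m b^T))) = 1 by nra.
have [a_eq dQ_eq'] : a = expR (a - 1) /\ \det Q = expR (\tr Q - k%:R) by split; nra.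
have b0 : b = 0.
  move: eb_eq1; rewrite -expR0 => /expR_inj /eqP; rewrite oppr_eq0 mulf_eq0.
  by rewrite invr_eq0 (negbTE (lt0r_neq0 a_gt0)) => /eqP /mxtrace_mul_tr_eq0.
move: (dQ_eq dQ_eq'); rewrite /Q b0 (eq_expR_subr1 a_eq) mul0mx scaler0 subr0 => ->.
by rewrite trmx0 -scalar_mx_block.
Qed.

Lemma cholesky k (S : 'M[R]_k) : posdef S -> exists2 L : 'M[R]_k, L \in unitmx & S = L *m L^T.
Proof.
elim: k S => [|k IH] S hS.
  by exists 1%:M; [exact: unitmx1 | apply/matrixP => [[]]].
have [a [b [D eS]]] := posdef_block hS; subst S.
have [a_gt0 hQ] := posdef_schur hS.
have [L' uL' eL'] := IH _ hQ.
change (exists2 L : 'M_(1 + k), L \in unitmx & block_mx a%:M b^T b D = L *m L^T).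
have sa_neq0 : Num.sqrt a != 0 by rewrite lt0r_neq0 ?sqrtr_gt0.
exists (block_mx (Num.sqrt a)%:M 0 ((Num.sqrt a)^-1 *: b) L' : 'M_(1 + k)).
  by rewrite unitmxE det_lblock det_scalar1 unitrM unitfE sa_neq0 -unitmxE.
rewrite tr_block_mx tr_scalar_mx trmx0 mulmx_block !mulmx0 !mul0mx !addr0.
congr block_mx.
- by rewrite -scalar_mxM -expr2 sqr_sqrtr // ltW.
- by rewrite linearZ /= mul_scalar_mx scalerA mulfV ?scale1r.
- by rewrite -scalemxAl mul_mx_scalar scalerA mulVf ?scale1r.
- rewrite -eL' linearZ /= -scalemxAl -scalemxAr scalerA -expr2 exprVn.
  by rewrite sqr_sqrtr ?ltW // addrC subrK.
Qed.

Lemma unitmx_mul_neq0 k (L : 'M[R]_k) (x : 'cV[R]_k) :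
  L \in unitmx -> x != 0 -> L *m x != 0.
Proof. by move=> uL; apply: contra => /eqP h; rewrite -(mulKmx uL x) h mulmx0. Qed.

Lemma posdef_unitmx k (S : 'M[R]_k) : posdef S -> S \in unitmx.
Proof.
by move=> /posdef_det_le_expR [det_gt0 _ _]; rewrite unitmxE unitfE lt0r_neq0.
Qed.

Lemma posdef_invmx k (S : 'M[R]_k) : posdef S -> posdef (invmx S).
Proof.
move=> hS; have uS := posdef_unitmx hS; case: hS => sS pS.
have sI : (invmx S)^T = invmx S by rewrite trmx_inv sS.
have uI : invmx S \in unitmx by rewrite unitmx_inv.
split=> // x x0; have := pS _ (unitmx_mul_neq0 uI x0).
by rewrite trmx_mul sI !mulmxA -(mulmxA _ S) mulmxV // mulmx1.
Qed.

(* Congruence by a Cholesky factor of S reduces to the case S = 1. *)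
Lemma det_mul_le_expR k (A S : 'M[R]_k) : posdef A -> posdef S ->
  \det A * \det S <= expR (\tr (A *m S) - k%:R) /\
  (\det A * \det S = expR (\tr (A *m S) - k%:R) -> A *m S = 1%:M).
Proof.
move=> [sA pA] hS; have [L uL eS] := cholesky hS.
pose X := L^T *m A *m L.
have hX : posdef X.
  split; first by rewrite /X !trmx_mul trmxK sA mulmxA.
  by move=> x x0; have := pA _ (unitmx_mul_neq0 uL x0); rewrite /X trmx_mul !mulmxA.
have [_ le_X eq_X] := posdef_det_le_expR hX.
have detX : \det X = \det A * \det S by rewrite /X eS !det_mulmx det_tr; ring.
have trX : \tr X = \tr (A *m S) by rewrite /X -mulmxA mxtrace_mulC -mulmxA -eS.
rewrite -detX -trX; split=> // /eq_X X1.
have uLT : L^T \in unitmx by rewrite unitmx_tr.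
have -> : A *m S = invmx L^T *m (X *m L^T) by rewrite /X eS !mulmxA mulVmx ?mul1mx.
by rewrite X1 mul1mx mulVmx.
Qed.

Lemma gaussian_score_lt k (A S : 'M[R]_k) : posdef A -> posdef S -> A != invmx S ->
  \det A * expR (- \tr (A *m S)) < \det (invmx S) * expR (- \tr (invmx S *m S)).
Proof.
move=> hA hS neqA; have uS := posdef_unitmx hS.
have [detS_gt0 _ _] := posdef_det_le_expR hS.
have [le_AS eq_AS] := det_mul_le_expR hA hS.
have lt_AS : \det A * \det S < expR (\tr (A *m S) - k%:R).
  rewrite lt_neqAle le_AS andbT; apply: contra neqA => /eqP /eq_AS AS1.
  by rewrite -[A]mulmx1 -(mulmxV uS) mulmxA AS1 mul1mx.
rewrite det_inv mulVmx // mxtrace1 expRN ltr_pdivrMr ?expR_gt0 //.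
by rewrite -mulrA mulrC ltr_pdivlMr // mulrC -expRD mulrC addrC.
Qed.
End PosdefDet.

Section Blocks.
Variable R : realType.
Variables N m : nat.

Lemma pos_ofK (i : 'I_N) (r : 'I_m) : pair_of (pos_of i r) = (i, r).
Proof. by rewrite /pair_of /pos_of /mxvec_index cast_ordK enum_rankK. Qed.

Lemma pair_ofK (a : 'I_(N * m)) : pos_of (pair_of a).1 (pair_of a).2 = a.
Proof.
by rewrite /pair_of /pos_of /mxvec_index -surjective_pairing enum_valK cast_ordKV.
Qed.

Lemma blk_blkmx (B : 'I_N -> 'I_N -> 'M[R]_m) i j : blk (blkmx B) i j = B i j.
Proof. by apply/matrixP => r s; rewrite !mxE !pos_ofK. Qed.

Lemma blkP (A B : 'M[R]_(N * m)) : (forall i j, blk A i j = blk B i j) -> A = B.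
Proof.
move=> eqAB; apply/matrixP => a b; rewrite -(pair_ofK a) -(pair_ofK b).
move/matrixP: (eqAB (pair_of a).1 (pair_of b).1) => /(_ (pair_of a).2 (pair_of b).2).
by rewrite !mxE.
Qed.

Lemma blk_trmx (A : 'M[R]_(N * m)) i j : blk A^T i j = (blk A j i)^T.
Proof. by apply/matrixP => r s; rewrite !mxE. Qed.

Lemma blkZ c (A : 'M[R]_(N * m)) i j : blk (c *: A) i j = c *: blk A i j.
Proof. by apply/matrixP => r s; rewrite !mxE. Qed.

Lemma blkn_ord (A : 'M[R]_(N * m)) (k l : 'I_N) : blkn A k l = blk A k l.
Proof.
rewrite /blkn; case: insubP => [u _ /val_inj -> |]; last by rewrite ltn_ord.
by case: insubP => [u' _ /val_inj -> //|]; rewrite ltn_ord.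
Qed.

Lemma big_pos_of (F : 'I_(N * m) -> R) :
  \sum_a F a = \sum_(i < N) \sum_(r < m) F (pos_of i r).
Proof.
rewrite pair_big /= (reindex (fun p : 'I_N * 'I_m => pos_of p.1 p.2)) //.
by exists (@pair_of N m) => [[i r]|a] _; rewrite ?pos_ofK ?pair_ofK.
Qed.

Lemma mxtrace_mul_blk (A B : 'M[R]_(N * m)) :
  \tr (A *m B) = \sum_(i < N) \sum_(j < N) \tr (blk A i j *m blk B j i).
Proof.
rewrite /mxtrace big_pos_of; apply: eq_bigr => i _.
rewrite exchange_big /=; apply: eq_bigr => r _.
rewrite mxE big_pos_of; apply: eq_bigr => j _.
by rewrite mxE; apply: eq_bigr => s _; rewrite !mxE.
Qed.
End Blocks.

Section CyclicShift.
Variable N : nat.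

Lemma shiftN_val (j : 'I_N) d : val (shiftN j d) = ((j + d) %% N)%N.
Proof. by rewrite /shiftN val_insubd ltn_pmod // (leq_ltn_trans _ (ltn_ord j)). Qed.

Lemma cdiff_eq (i j d : nat) : (j < N)%N -> (d < N)%N ->
  (i %% N = (j + d) %% N)%N -> cdiff N i j = d.
Proof.
move=> jN dN eq_ij; rewrite /cdiff -(modn_small dN); apply/eqP.
rewrite -(eqn_modDr j) subnK; last by apply: leq_trans (ltnW jN) (leq_addl _ _).
by rewrite modnDr eq_ij addnC.
Qed.

Lemma cdiff_shiftNl (j : 'I_N) d : (d < N)%N -> cdiff N (shiftN j d) j = d.
Proof. by move=> dN; apply: cdiff_eq; rewrite ?shiftN_val ?modn_mod. Qed.

Lemma cdiff_shiftNr (j : 'I_N) d : (d < N)%N -> cdiff N j (shiftN j d) = ((N - d) %% N)%N.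
Proof.
move=> dN; have N_gt0 : (0 < N)%N by apply: leq_ltn_trans (ltn_ord j).
apply: cdiff_eq; rewrite ?shiftN_val ?ltn_pmod //.
by rewrite modnDm -addnA subnKC ?(ltnW dN) // modnDr.
Qed.

Lemma shiftN_subK (j : 'I_N) d : (d < N)%N -> shiftN (shiftN j ((N - d) %% N)) d = j.
Proof.
move=> dN; apply: val_inj; rewrite /= !shiftN_val modnDml -addnA -modnDmr modnDml.
by rewrite subnK ?(ltnW dN) // modnn addn0 modn_small.
Qed.

Lemma shiftN_inj (j : 'I_N) : injective (fun d : 'I_N => shiftN j d).
Proof.
move=> d1 d2 /= eq_d; apply: ord_inj.
by rewrite -(cdiff_shiftNl j (ltn_ord d1)) eq_d cdiff_shiftNl.
Qed.

Lemma shiftN_sub_inj d : (d < N)%N -> injective (fun j : 'I_N => shiftN j ((N - d) %% N)).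
Proof. by move=> dN j1 j2 /= eq_j; rewrite -(shiftN_subK j1 dN) eq_j shiftN_subK. Qed.
End CyclicShift.

Section BandedCirculant.
Variable R : realType.
Variables N n m : nat.

Lemma getM_ord (M : 'I_n.+1 -> 'M[R]_m) (k : 'I_n.+1) : getM M k = M k.
Proof. by rewrite /getM; case: insubP => [u _ /val_inj -> //|]; rewrite ltn_ord. Qed.

Lemma blk_bigM (M : 'I_n.+1 -> 'M[R]_m) i j : blk (bigM N M) i j =
  if (cdiff N i j <= n)%N then getM M (cdiff N i j)
  else if (cdiff N j i <= n)%N then (getM M (cdiff N j i))^T else 0.
Proof. exact: blk_blkmx. Qed.

Definition lagM (M : 'I_n.+1 -> 'M[R]_m) (d : nat) : 'M[R]_m :=
  if (d <= n)%N then getM M d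
  else if ((N - d) %% N <= n)%N then (getM M ((N - d) %% N))^T else 0.

Lemma blk_bigM_shiftN (M : 'I_n.+1 -> 'M[R]_m) (j : 'I_N) d : (d < N)%N ->
  blk (bigM N M) (shiftN j d) j = lagM M d.
Proof. by move=> dN; rewrite blk_bigM cdiff_shiftNl // cdiff_shiftNr. Qed.

Definition lagsum (Z : 'M[R]_(N * m)) (e : nat) : 'M[R]_m :=
  \sum_(j < N) blk Z (shiftN j e) j.

Lemma lagsumZ c (Z : 'M[R]_(N * m)) e : lagsum (c *: Z) e = c *: lagsum Z e.
Proof. by rewrite /lagsum scaler_sumr; apply: eq_bigr => j _; rewrite blkZ. Qed.

Lemma sum_blk_shiftN_trmx (Z : 'M[R]_(N * m)) d :
  \sum_(j < N) blk Z j (shiftN j d) = (lagsum Z^T d)^T.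
Proof. by rewrite /lagsum raddf_sum; apply: eq_bigr => j _; rewrite /= blk_trmx trmxK. Qed.

Lemma sum_blk_shiftN_rev (Z : 'M[R]_(N * m)) d : (d < N)%N ->
  \sum_(j < N) blk Z j (shiftN j d) = lagsum Z ((N - d) %% N).
Proof.
move=> dN; rewrite /lagsum (reindex_inj (shiftN_sub_inj dN)) /=.
by apply: eq_bigr => j _; rewrite shiftN_subK.
Qed.

Lemma mxtrace_bigM_lag (M : 'I_n.+1 -> 'M[R]_m) (Z : 'M[R]_(N * m)) :
  \tr (bigM N M *m Z) = \sum_(d < N) \tr (lagM M d *m \sum_(j < N) blk Z j (shiftN j d)).
Proof.
rewrite mxtrace_mul_blk exchange_big /=.
under eq_bigr => j _ do rewrite (reindex_inj (@shiftN_inj N j)) /=.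
rewrite exchange_big /=; apply: eq_bigr => d _.
rewrite mulmx_sumr raddf_sum /=; apply: eq_bigr => j _.
by rewrite blk_bigM_shiftN.
Qed.

Lemma mxtrace_bigM_lagsum (M : 'I_n.+1 -> 'M[R]_m) (Z1 Z2 : 'M[R]_(N * m)) :
  Z1^T = Z1 -> Z2^T = Z2 -> (forall e, (e <= n)%N -> lagsum Z1 e = lagsum Z2 e) ->
  \tr (bigM N M *m Z1) = \tr (bigM N M *m Z2).
Proof.
move=> sZ1 sZ2 eq_lag; rewrite !mxtrace_bigM_lag; apply: eq_bigr => d _.
rewrite /lagM; case: ifP => [dn | _]; first by rewrite !sum_blk_shiftN_trmx sZ1 sZ2 eq_lag.
case: ifP => [dn | _]; last by rewrite !mul0mx.
by rewrite !sum_blk_shiftN_rev // eq_lag.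
Qed.

Lemma blkn_bigM (M : 'I_n.+1 -> 'M[R]_m) (k : 'I_n.+1) : (n < N)%N ->
  blkn (bigM N M) k 0 = M k.
Proof.
move=> nN; have kN : (k < N)%N := leq_ltn_trans (leq_ord k) nN.
have N_gt0 : (0 < N)%N := leq_ltn_trans (leq0n _) nN.
have ck : cdiff N k 0 = k by apply: cdiff_eq => //; rewrite add0n.
by rewrite (blkn_ord _ (Ordinal kN) (Ordinal N_gt0)) blk_bigM /= ck leq_ord getM_ord.
Qed.

Lemma bigM_first_column (A : 'M[R]_(N * m)) (C : nat -> 'M[R]_m) : (n < N)%N -> A^T = A ->
  (forall i j : 'I_N, blk A i j = C (cdiff N i j)) ->
  (forall i j : 'I_N, (n < minn (cdiff N i j) (cdiff N j i))%N -> blk A i j = 0) ->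
  bigM N (fun k : 'I_n.+1 => blkn A k 0) = A.
Proof.
move=> nN sA circA bandA; have N_gt0 : (0 < N)%N := leq_ltn_trans (leq0n _) nN.
have firstA k : (k <= n)%N -> getM (fun k : 'I_n.+1 => blkn A k 0) k = C k.
  move=> kn; have kN : (k < N)%N := leq_ltn_trans kn nN.
  rewrite (getM_ord _ (Ordinal (kn : k < n.+1)%N)) /= (blkn_ord _ (Ordinal kN) (Ordinal N_gt0)).
  by rewrite circA; congr C; apply: cdiff_eq => //; rewrite add0n.
apply: blkP => i j; rewrite blk_bigM.
case: ifP => h1; first by rewrite firstA // circA.
case: ifP => h2; first by rewrite firstA // -circA -blk_trmx sA.
by rewrite bandA // leq_min !ltnNge h1 h2.
Qed.
Lemma lagsum_circulant (Z : 'M[R]_(N * m)) (S : nat -> 'M[R]_m) e :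
  (forall i j : 'I_N, blk Z i j = S (cdiff N i j)) -> (e < N)%N ->
  lagsum Z e = N%:R *: S e.
Proof.
move=> circZ eN; rewrite /lagsum.
under eq_bigr => j _ do rewrite circZ cdiff_shiftNl //.
by rewrite sumr_const card_ord scaler_nat.
Qed.
End BandedCirculant.

Section Likelihood.
Variable R : realType.
Variables N n m T : nat.
Variable y : 'I_T -> 'cV[R]_(N * m).

Lemma quadform_mxtrace k (A : 'M[R]_k) (x : 'cV[R]_k) :
  (x^T *m A *m x) 0 0 = \tr (A *m (x *m x^T)).
Proof.
have -> : (x^T *m A *m x) 0 0 = \tr (x^T *m A *m x) by rewrite /mxtrace big_ord1.
by rewrite mxtrace_mulC (mulmxA x) mxtrace_mulC.
Qed.

Definition scatter : 'M[R]_(N * m) := \sum_(t < T) y t *m (y t)^T.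

Lemma sum_quadform (A : 'M[R]_(N * m)) :
  \sum_(t < T) ((y t)^T *m A *m y t) 0 0 = \tr (A *m scatter).
Proof.
rewrite /scatter mulmx_sumr raddf_sum /=.
by apply: eq_bigr => t _; rewrite quadform_mxtrace.
Qed.

Lemma scatter_sym : scatter^T = scatter.
Proof. by rewrite /scatter raddf_sum; apply: eq_bigr => t _; rewrite /= trmx_mul trmxK. Qed.

Lemma lagsum_scatter e : (0 < N)%N -> (0 < T)%N ->
  lagsum scatter e = (N * T)%:R *: sampleCov y e.
Proof.
move=> N_gt0 T_gt0.
have NT_neq0 : (N * T)%:R != 0 :> R by rewrite pnatr_eq0 muln_eq0 negb_or -!lt0n N_gt0.
rewrite /sampleCov scalerA mulfV // scale1r exchange_big /=.
apply: eq_bigr => j _; apply/matrixP => r s; rewrite mxE /scatter !summxE.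
by apply: eq_bigr => t _; rewrite !mx11_mulE !mxE.
Qed.

Section BandExtension.
Variables (Sig : 'M[R]_(N * m)) (S : nat -> 'M[R]_m).
Hypotheses (nN : (n < N)%N) (T_gt0 : (0 < T)%N) (sSig : Sig^T = Sig).
Hypothesis circSig : forall i j : 'I_N, blk Sig i j = S (cdiff N i j).
Hypothesis sampleS : forall k, (k <= n)%N -> S k = sampleCov y k.

Lemma mxtrace_bigM_scatter (M : 'I_n.+1 -> 'M[R]_m) :
  \tr (bigM N M *m scatter) = T%:R * \tr (bigM N M *m Sig).
Proof.
have N_gt0 : (0 < N)%N := leq_ltn_trans (leq0n _) nN.
rewrite -mxtraceZ scalemxAr; apply: mxtrace_bigM_lagsum.
- exact: scatter_sym.
- by rewrite linearZ /= sSig.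
move=> e en; have eN : (e < N)%N := leq_ltn_trans en nN.
rewrite lagsumZ lagsum_scatter // (lagsum_circulant circSig eN) sampleS //.
by rewrite scalerA natrM mulrC.
Qed.

Lemma likelihood_band (M : 'I_n.+1 -> 'M[R]_m) :
  likelihood M y = (Num.sqrt (2 * pi)) ^- (N * m) ^+ T *
    (Num.sqrt (\det (bigM N M)) * expR (- (1 / 2) * \tr (bigM N M *m Sig))) ^+ T.
Proof.
rewrite /likelihood /density !big_split /= !prodr_const card_ord -expR_sum.
rewrite -mulr_sumr sum_quadform mxtrace_bigM_scatter.
by rewrite mulrCA expRM_natl exprMn mulrA.
Qed.
End BandExtension.
End Likelihood.

Lemma ltr_gaussian_factor (R : realType) (c d1 d2 t1 t2 : R) (T : nat) :
  0 < c -> (0 < T)%N -> 0 <= d1 -> 0 <= d2 -> d1 * expR (- t1) < d2 * expR (- t2) ->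
  c ^+ T * (Num.sqrt d1 * expR (- (1 / 2) * t1)) ^+ T <
  c ^+ T * (Num.sqrt d2 * expR (- (1 / 2) * t2)) ^+ T.
Proof.
move=> c_gt0 T_gt0 d1_ge0 d2_ge0 lt_sq.
have sq_factor d t : 0 <= d -> (Num.sqrt d * expR (- (1 / 2) * t)) ^+ 2 = d * expR (- t).
  by move=> d_ge0; rewrite exprMn sqr_sqrtr // -expRM_natl; congr (_ * expR _); lra.
rewrite ltr_pM2l ?exprn_gt0 // ltr_pXn2r // ?qualifE /= ?mulr_ge0 ?sqrtr_ge0 ?expR_ge0 //.
by rewrite -(@ltr_pXn2r _ 2) // ?qualifE /= ?mulr_ge0 ?sqrtr_ge0 ?expR_ge0 // !sq_factor.
Qed.

Theorem theorem4 (R : realType) (m n N T : nat)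
  (hm : (1 <= m)%N) (hn : (1 <= n)%N) (hN : (2 * n < N)%N) (hT : (1 <= T)%N)
  (y : 'I_T -> 'cV[R]_(N * m)) (Sig : 'M[R]_(N * m)) :
  circ_band_ext n y Sig ->
  let Mhat : 'I_n.+1 -> 'M[R]_m := fun k => blkn (invmx Sig) k 0 in
  admissible N Mhat /\
  forall M : 'I_n.+1 -> 'M[R]_m, admissible N M -> (exists k, M k <> Mhat k) ->
    likelihood M y < likelihood Mhat y.
Proof.
move=> [hSig [[S [circS sampleS]] [[C circI] bandI]]] Mhat.
have nN : (n < N)%N by rewrite (leq_ltn_trans _ hN) // mul2n -addnn leq_addr.
have N_gt0 : (0 < N)%N := leq_ltn_trans (leq0n _) nN.
have hI := posdef_invmx hSig; have [sI _] := hI.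
have bigMhat : bigM N Mhat = invmx Sig := bigM_first_column nN sI circI bandI.
split.
  split; last by rewrite bigMhat.
  by rewrite /Mhat /= (blkn_ord _ (Ordinal N_gt0) (Ordinal N_gt0)) -blk_trmx sI.
move=> M [_ hM] [k neq_k].
have neqM : bigM N M != invmx Sig.
  by apply: contra_notN neq_k => /eqP eqM; rewrite -(blkn_bigM M k nN) eqM.
have lik := likelihood_band nN hT (proj1 hSig) circS sampleS.
rewrite !lik bigMhat.
have [detM_gt0 _ _] := posdef_det_le_expR hM.
have [detI_gt0 _ _] := posdef_det_le_expR hI.
apply: ltr_gaussian_factor; rewrite ?ltW //; last exact: gaussian_score_lt.
by rewrite invr_gt0 exprn_gt0 // sqrtr_gt0 mulr_gt0 // pi_gt0.
Qed.
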